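(* Let $G$ be a graph of order $n\ge2$. The following are equivalent: (1) $G\cong K_{n-r}\sqcup rK_1$ for some $r$ with $n-r\ge2$; (2) $\operatorname{zir}(G)=n-1$; (3) $\operatorname{Z}(G)=n-1$; (4) $\overline{\operatorname{Z}}(G)=n-1$; (5) $\operatorname{ZIR}(G)=n-1$.
   Context: $\sqcup$ denotes disjoint union and $rK_1$ is $r$ isolated vertices. Zero forcing: a blue vertex $u$ changes a white vertex $w$ to blue if $w$ is the only white neighbor of $u$; $B$ is a zero forcing set if from blue set $B$ eventually all vertices are blue; $\operatorname{Z}(G)$ is the minimum size of a zero forcing set and $\overline{\operatorname{Z}}(G)$ the maximum size of an inclusion-minimal zero forcing set. A nonempty $F\subseteq V(G)$ is a fort if every $v\notin F$ has $|N(v)\cap F|\ne1$. A private fort of $x\in S$ relative to $S$ is a fort $F$ with $S\cap F=\{x\}$; $S$ is a ZIr-set if every element of $S$ has a private fort. $\operatorname{zir}(G)$ / $\operatorname{ZIR}(G)$ are the minimum / maximum cardinality of an inclusion-maximal ZIr-set. *)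

From mathcomp Require Import all_boot.
Set Implicit Arguments. Unset Strict Implicit. Unset Printing Implicit Defensive.

(* A finite simple graph: vertex type T : finType, adjacency e : rel T,
   assumed symmetric and irreflexive (hypotheses of the theorem). *)
Section Graph.
Variables (T : finType) (e : rel T).

Definition force_step (S : {set T}) : {set T} :=
  S :|: [set w | [exists u in S,
            e u w && [forall x, (e u x && (x != w)) ==> (x \in S)]]].

(* Final colouring: forcing rounds stabilise after at most #|T| rounds. *)
Definition zf_closure (B : {set T}) : {set T} := iter #|T| force_step B.

Definition zero_forcing (B : {set T}) : bool := zf_closure B == [set: T].

(* Z(G): minimum size of a zero forcing set (V is always one). *)
Definition Znum : nat := \big[minn/#|T|]_(B : {set T} | zero_forcing B) #|B|.

Definition Zbar : nat := \max_(B : {set T} | minset zero_forcing B) #|B|.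

Definition fort (F : {set T}) : bool :=
  (F != set0) && [forall v in ~: F, #|[set u in F | e v u]| != 1].

Definition private_fort (S : {set T}) (x : T) (F : {set T}) : bool :=
  fort F && (S :&: F == [set x]).

Definition ZIr_set (S : {set T}) : bool :=
  [forall x in S, [exists F : {set T}, private_fort S x F]].

Definition zir : nat := \big[minn/#|T|]_(S : {set T} | maxset ZIr_set S) #|S|.
Definition ZIR : nat := \max_(S : {set T} | maxset ZIr_set S) #|S|.

End Graph.

Definition clique_plus_isolated (n m : nat) : rel 'I_n :=
  fun i j => (i != j) && (i < m) && (j < m).

From mathcomp Require Import all_boot order zify.
Set Implicit Arguments. Unset Strict Implicit. Unset Printing Implicit Defensive.

(* A fort that contains no blue vertex never receives one, so every zero
   forcing set meets every fort.  In K_m ⊔ rK_1 each isolated vertex and each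
   pair of clique vertices is a fort; hence a zero forcing set misses at most
   one vertex, V - k is a minimal zero forcing set for every clique vertex k,
   and the ZIr-sets are exactly the sets missing some clique vertex, so the
   maximal ones are the sets V - k.  All four parameters are therefore n - 1.
   Conversely, suppose V - v is zero forcing and no V - {v, w} is, or that
   V - v is a maximal ZIr-set.  Then every non-isolated w <> v is a twin of v:
   a vertex adjacent to exactly one of v, w would force one of them, resp.
   the private fort of w must be {v, w}.  A graph with an edge in which all
   non-isolated vertices are twins of v is a clique plus isolated vertices. *)

Section ExtremalValues.
Import Order.TTheory.
Variables (I : finType) (P : pred I) (F : I -> nat).

Lemma bigminn_eqP m c j : P j -> (forall i, P i -> F i <= m) ->
  reflect ((exists2 i, P i & F i = c) /\ (forall i, P i -> c <= F i))
          (\big[minn/m]_(i | P i) F i == c).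
Proof.
rewrite -minEnat => Pj leFm; apply: (iffP eqP) => [<-|[[i Pi <-] leF]].
  split=> [|i Pi]; last exact: (bigmin_le_cond m F Pi).
  rewrite (bigmin_eq_arg m j P F Pj leFm).
  by case: (arg_minP F Pj) => k Pk _; exists k.
apply: le_anti; rewrite (bigmin_le_cond m F Pi) /=.
by apply/bigmin_geP; split => //; exact: leFm.
Qed.

Lemma bigmaxn_eqP c j : P j ->
  reflect ((exists2 i, P i & F i = c) /\ (forall i, P i -> F i <= c))
          (\max_(i | P i) F i == c).
Proof.
rewrite -maxEnat => Pj; apply: (iffP eqP) => [<-|[[i Pi <-] leF]].
  split=> [|i Pi]; last exact: (le_bigmax_cond 0 F Pi).
  rewrite (bigmax_eq_arg 0 j P F Pj) => [|i _]; last exact: leq0n.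
  by case: (arg_maxP F Pj) => k Pk _; exists k.
apply: le_anti; rewrite (le_bigmax_cond 0 F Pi) andbT.
by apply/bigmax_leP; split => //; exact: leq0n.
Qed.

End ExtremalValues.

Section Cardinalities.
Variable T : finType.

Lemma cards_setC2 (v w : T) : v != w -> #|~: [set v; w]| = #|T| - 2.
Proof. by move=> vw; have := cardsC [set v; w]; rewrite cards2 vw; lia. Qed.

Lemma cards_setC1 (v : T) : #|[set~ v]| = #|T| - 1.
Proof. by rewrite cardsC1 subn1. Qed.

Lemma setC1_of_cards (B : {set T}) : 0 < #|T| -> #|B| = #|T| - 1 ->
  exists v, B = [set~ v].
Proof.
move=> T_gt0 cardB; have /cards1P[v Bv] : #|~: B| == 1 by have := cardsC B; lia.
by exists v; rewrite -Bv setCK.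
Qed.

End Cardinalities.

Section ZeroForcing.
Variables (T : finType) (e : rel T).

Lemma iter_force_step_subset k m (B : {set T}) : k <= m ->
  iter k (force_step e) B \subset iter m (force_step e) B.
Proof.
move=> /subnK <-; elim: (m - k) => [|d IHd] //=.
exact: subset_trans IHd (subsetUl _ _).
Qed.

Lemma zero_forcing_iter k (B : {set T}) : k <= #|T| ->
  iter k (force_step e) B = [set: T] -> zero_forcing e B.
Proof.
move=> le_k_T iterB; rewrite /zero_forcing /zf_closure eqEsubset subsetT /=.
by rewrite -iterB iter_force_step_subset.
Qed.

Lemma mem_force_step (S : {set T}) u w : u \in S -> e u w ->
  (forall x, e u x -> x != w -> x \in S) -> w \in force_step e S.
Proof.
move=> uS euw only_w; rewrite !inE; apply/orP; right.
apply/existsP; exists u; rewrite uS euw; apply/forallP => x.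
by apply/implyP => /andP[]; exact: only_w.
Qed.

Lemma fort_second_neighbour (F : {set T}) u z : fort e F -> u \notin F ->
  z \in F -> e u z -> exists y, [&& y \in F, y != z & e u y].
Proof.
case/andP=> _ /forallP/(_ u); rewrite inE => /implyP fortF uF zF euz.
apply/existsP; apply: contraNT (fortF uF) => /existsPn lone.
apply/cards1P; exists z; apply/setP => y; rewrite !inE.
apply/andP/eqP => [[yF euy]|-> //]; apply: contraNeq (lone y) => yz.
by rewrite yF yz euy.
Qed.

Lemma fort_disjoint_force_step (F S : {set T}) : fort e F ->
  [disjoint F & S] -> [disjoint F & force_step e S].
Proof.
move=> fortF FS; rewrite disjoint_subset; apply/subsetP => w wF.
rewrite !inE (disjointFr FS wF) /=; apply/existsP => -[u /and3P[uS euw /forallP blue]].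
have uF : u \notin F by apply: contraTN uS => uF; rewrite (disjointFr FS uF).
have [y /and3P[yF yw euy]] := fort_second_neighbour fortF uF wF euw.
by have := blue y; rewrite euy yw (disjointFr FS yF).
Qed.

Lemma fort_not_zero_forcing (F B : {set T}) : fort e F ->
  [disjoint F & B] -> ~~ zero_forcing e B.
Proof.
move=> fortF FB; have FBclosed : [disjoint F & zf_closure e B].
  by rewrite /zf_closure; elim: #|T| => //= k; exact: fort_disjoint_force_step.
case/andP: fortF => /set0Pn[x xF] _; apply/eqP => closedB.
by move: (disjointFr FBclosed xF); rewrite closedB inE.
Qed.

Lemma zero_forcing_setT : zero_forcing e [set: T].
Proof. exact: (@zero_forcing_iter 0). Qed.

Lemma exists_minimal_zero_forcing : exists B, minset (zero_forcing e) B.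
Proof. by have [B minB _] := minset_exists zero_forcing_setT; exists B. Qed.

Lemma exists_maximal_ZIr_set : exists S, maxset (ZIr_set e) S.
Proof.
have ZIr_set0 : ZIr_set e set0 by apply/forall_inP => x; rewrite inE.
by have [S maxS _] := maxset_exists ZIr_set0; exists S.
Qed.

Definition twins (v w : T) := forall u, u != v -> u != w -> e u v = e u w.

Definition clique_plus_isolated_on (K : {set T}) :=
  1 < #|K| /\ forall x y, e x y = [&& x != y, x \in K & y \in K].

Lemma fort_set1 x : (forall y, ~~ e y x) -> fort e [set x].
Proof.
move=> isolated_x; apply/andP; split; first by apply/set0Pn; exists x; rewrite inE.
apply/forall_inP => u _; rewrite (_ : [set y in _ | _] = set0) ?cards0 //.
by apply/setP => y; rewrite !inE; case: eqP => // ->; rewrite (negbTE (isolated_x u)).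
Qed.

Lemma fort_pairP v w : v != w -> reflect (twins v w) (fort e [set v; w]).
Proof.
move=> vw; apply: (iffP idP) => [fortF u uv uw | vw_twins].
  have uF : u \notin [set v; w] by rewrite !inE negb_or uv.
  apply/idP/idP => [euv|euw].
    have [y] := fort_second_neighbour fortF uF (set21 v w) euv.
    by rewrite !inE => /and3P[/orP[]/eqP-> //]; rewrite eqxx.
  have [y] := fort_second_neighbour fortF uF (set22 v w) euw.
  by rewrite !inE => /and3P[/orP[]/eqP-> //]; rewrite eqxx.
apply/andP; split; first by apply/set0Pn; exists v; rewrite set21.
apply/forall_inP => u; rewrite !inE negb_or => /andP[uv uw].
have euvw := vw_twins u uv uw.
case euv: (e u v).
  rewrite (_ : [set y in _ | _] = [set v; w]) ?cards2 ?vw //.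
  by apply/setP => y; rewrite !inE; case: eqP => [->|_]; case: eqP => [->|];
    rewrite -?euvw ?euv ?andbF.
rewrite (_ : [set y in _ | _] = set0) ?cards0 //.
by apply/setP => y; rewrite !inE; case: eqP => [->|_]; case: eqP => [->|];
  rewrite -?euvw ?euv ?andbF.
Qed.

End ZeroForcing.

Section SimpleGraph.
Variables (T : finType) (e : rel T).
Hypotheses (esym : symmetric e) (eirr : irreflexive e).

Lemma adj_neq x y : e x y -> x != y.
Proof. by apply: contraTneq => ->; rewrite eirr. Qed.

Lemma force_step_full (S : {set T}) q a : [set~ q] \subset S -> e q a ->
  force_step e S = [set: T].
Proof.
move=> qS eqa; apply/eqP; rewrite eqEsubset subsetT; apply/subsetP => x _.
have inS y : y != q -> y \in S by move=> yq; apply: (subsetP qS); rewrite !inE.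
case: (eqVneq x q) => [->|xq]; last by rewrite /force_step inE inS.
apply: (mem_force_step (u := a)); last by move=> y _; exact: inS.
  by rewrite inS // eq_sym adj_neq.
by rewrite esym.
Qed.

Lemma zero_forcing_setC1 q a : e q a -> zero_forcing e [set~ q].
Proof.
move=> eqa; apply: (@zero_forcing_iter _ _ 1); last exact: force_step_full eqa.
by apply/card_gt0P; exists q.
Qed.

Lemma force_step_setC2 p q u : u != p -> u != q -> e u p -> ~~ e u q ->
  [set~ q] \subset force_step e (~: [set p; q]).
Proof.
move=> up uq eup nuq; apply/subsetP => x; rewrite in_setC1 => xq.
case: (eqVneq x p) => [->|xp].
  2: by apply: (subsetP (subsetUl _ _)); rewrite !inE negb_or xp.
apply: (mem_force_step (u := u)) => [|//|y euy yp]; first by rewrite !inE negb_or up.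
by rewrite !inE negb_or yp; apply: contraNneq nuq => <-.
Qed.

Lemma zero_forcing_setC2 p q u a : u != p -> u != q -> e u p -> ~~ e u q ->
  e q a -> zero_forcing e (~: [set p; q]).
Proof.
move=> up uq eup nuq eqa; apply: (@zero_forcing_iter _ _ 2).
  have pq : p != q by apply: contraNneq nuq => <-.
  by have := max_card [set p; q]; rewrite cards2 pq.
exact: force_step_full (force_step_setC2 up uq eup nuq) eqa.
Qed.

Lemma twins_of_not_zero_forcing v w a b : e v a -> e w b ->
  ~~ zero_forcing e (~: [set v; w]) -> twins e v w.
Proof.
move=> eva ewb notZF u uv uw; apply/eqP; apply: contraNT notZF => neq.
case euv: (e u v) neq; case euw: (e u w) => // _.
  by apply: (zero_forcing_setC2 (u := u) (a := b)); rewrite ?euw.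
by rewrite setUC; apply: (zero_forcing_setC2 (u := u) (a := a)); rewrite ?euv.
Qed.

Lemma clique_plus_isolated_of_twins v : (exists x y, e x y) ->
  (forall w b, w != v -> e w b -> twins e v w) ->
  exists K, clique_plus_isolated_on e K.
Proof.
move=> [x0 [y0 exy0]] twins_v.
have [a eva] : exists a, e v a.
  case: (eqVneq x0 v) => [<-|x0v]; first by exists y0.
  case: (eqVneq y0 v) => [y0v|y0v]; first by exists x0; rewrite -y0v esym.
  exists y0; rewrite esym (twins_v x0 y0) //; first by rewrite esym.
  by rewrite eq_sym adj_neq.
have adj_v x b : x != v -> e x b -> e x v.
  move=> xv exb; case: (eqVneq b v) => [<-//|bv].
  have ebv : e b v.
    rewrite (twins_v x b) //; first by rewrite esym.
    by rewrite eq_sym adj_neq.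
  by rewrite (twins_v b v) // adj_neq.
exists [set x | [exists y, e x y]]; split.
  apply/card_gt1P; exists v, a; rewrite !inE adj_neq //.
  by split=> //; apply/existsP; [exists a | exists v; rewrite esym].
move=> x y; rewrite !inE; apply/idP/and3P => [exy|[xy /existsP[b exb] /existsP[c eyc]]].
  by rewrite adj_neq //; split=> //; apply/existsP; [exists y | exists x; rewrite esym].
case: (eqVneq x v) => [xv|xv]; first by rewrite xv esym (adj_v y c) // eq_sym -xv.
case: (eqVneq y v) => [->|yv]; first exact: adj_v exb.
by rewrite -(twins_v y c) // (adj_v x b).
Qed.

Lemma clique_plus_isolated_of_zero_forcing_setC1 v : zero_forcing e [set~ v] ->
  (forall w, w != v -> ~~ zero_forcing e (~: [set v; w])) ->
  exists K, clique_plus_isolated_on e K.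
Proof.
move=> ZFv notZF; have [a eva] : exists a, e v a.
  case: (pickP (e v)) => [a eva|isolated_v]; first by exists a.
  have fort_v : fort e [set v] by apply: fort_set1 => y; rewrite esym isolated_v.
  by move: ZFv; rewrite (negbTE (fort_not_zero_forcing fort_v _)) // disjoints1 !inE negbK.
apply: (clique_plus_isolated_of_twins (v := v)); first by exists v, a.
by move=> w b wv ewb; apply: (twins_of_not_zero_forcing eva ewb); exact: notZF.
Qed.

Lemma clique_plus_isolated_of_maximal_ZIr_setC1 v : maxset (ZIr_set e) [set~ v] ->
  exists K, clique_plus_isolated_on e K.
Proof.
case/maxsetP=> ZIr_v maxZIr_v.
have edge : exists x y, e x y.
  case: (pickP (fun x => [exists y, e x y])) => [x /existsP[y exy]|edgeless].
    by exists x, y.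
  suff ZIrT : ZIr_set e [set: T].
    by have /setP/(_ v) := maxZIr_v _ ZIrT (subsetT _); rewrite !inE eqxx.
  apply/forall_inP => x _; apply/existsP; exists [set x].
  rewrite /private_fort setTI eqxx andbT; apply: fort_set1 => y.
  by apply: contraFN (edgeless x) => eyx; apply/existsP; exists y; rewrite esym.
apply: (clique_plus_isolated_of_twins (v := v) edge) => w b wv ewb.
have /existsP[F /andP[fortF /eqP privF]] : [exists F, private_fort e [set~ v] w F].
  by apply: (forall_inP ZIr_v); rewrite !inE.
have inF y : y \in F -> y != v -> y = w.
  by move=> yF yv; apply/set1P; rewrite -privF !inE yv.
have wF : w \in F by have := set11 w; rewrite -privF inE => /andP[].
have vF : v \in F.
  apply: contraT => vF; have bF : b \notin F.
    apply/negP => bF; case: (eqVneq b v) => [bv|bv]; first by rewrite -bv bF in vF.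
    by move: (adj_neq ewb); rewrite (inF b bF bv) eqxx.
  have ebw : e b w by rewrite esym.
  have [y /and3P[yF yw _]] := fort_second_neighbour fortF bF wF ebw.
  by move: yw; rewrite (inF y yF) ?eqxx //; apply: contraNneq vF => <-.
apply/fort_pairP; first by rewrite eq_sym.
suff -> : [set v; w] = F by [].
apply/setP => y; rewrite !inE; apply/orP/idP => [[]/eqP -> // | yF].
by case: (eqVneq y v) => [|yv]; [left | right; rewrite (inF y yF yv)].
Qed.

End SimpleGraph.

Section CliquePlusIsolated.
Variables (T : finType) (e : rel T) (K : {set T}).
Hypothesis cliqueK : clique_plus_isolated_on e K.

Lemma clique_adj x y : e x y = [&& x != y, x \in K & y \in K].
Proof. by case: cliqueK. Qed.

Lemma clique_sym : symmetric e.
Proof. by move=> x y; rewrite !clique_adj eq_sym [(x \in K) && _]andbC. Qed.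

Lemma clique_irr : irreflexive e.
Proof. by move=> x; rewrite clique_adj eqxx. Qed.

Lemma clique_other_vertex k : exists2 k', k' \in K & k' != k.
Proof.
case: cliqueK => /card_gt1P[p [q [pK qK pq]]] _.
by case: (eqVneq p k) => [pk|]; [exists q; rewrite // -pk eq_sym | exists p].
Qed.

Lemma clique_nonempty : exists k, k \in K.
Proof. by case: cliqueK => /card_gt1P[p [_ [pK _ _]]] _; exists p. Qed.

Lemma fort_outside_clique x : x \notin K -> fort e [set x].
Proof. by move=> xK; apply: fort_set1 => y; rewrite clique_adj (negbTE xK) !andbF. Qed.

Lemma fort_clique_pair p q : p \in K -> q \in K -> p != q -> fort e [set p; q].
Proof.
by move=> pK qK pq; apply/(fort_pairP e pq) => u up uq; rewrite !clique_adj up uq pK qK.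
Qed.

Lemma zero_forcing_clique_card B : zero_forcing e B -> #|T| - 1 <= #|B|.
Proof.
move=> ZFB; suff : #|~: B| <= 1 by have := cardsC B; lia.
apply/card_le1_eqP => p q; rewrite !inE => pB qB; apply/eqP; apply: contraTT ZFB => qp.
have [pK|pK] := boolP (p \in K); last first.
  by apply: (fort_not_zero_forcing (fort_outside_clique pK)); rewrite disjoints1.
have [qK|qK] := boolP (q \in K); last first.
  by apply: (fort_not_zero_forcing (fort_outside_clique qK)); rewrite disjoints1.
apply: (fort_not_zero_forcing (fort_clique_pair pK qK _)); first by rewrite eq_sym.
by rewrite disjoint_subset; apply/subsetP => x; rewrite !inE => /orP[]/eqP->.
Qed.

Lemma zero_forcing_clique_setC1 k : k \in K -> zero_forcing e [set~ k].
Proof.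
move=> kK; have [k' k'K k'k] := clique_other_vertex k.
apply: (zero_forcing_setC1 clique_sym clique_irr (a := k')).
by rewrite clique_adj eq_sym k'k kK k'K.
Qed.

Lemma minimal_zero_forcing_clique_card B : minset (zero_forcing e) B ->
  #|B| = #|T| - 1.
Proof.
case/minsetP=> ZFB minB; have [k kK] := clique_nonempty.
have BT : B \proper [set: T].
  rewrite properT; apply/eqP => BT.
  have sub_kB : [set~ k] \subset B by rewrite BT subsetT.
  by have /setP/(_ k) := minB _ (zero_forcing_clique_setC1 kK) sub_kB; rewrite BT !inE eqxx.
by have := proper_card BT; have := zero_forcing_clique_card ZFB; rewrite cardsT; lia.
Qed.

Lemma ZIr_set_clique S : ZIr_set e S = ~~ (K \subset S).
Proof.
apply/idP/idP => [ZIrS|/subsetPn[k kK kS]].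
  apply/negP => KS; have [k kK] := clique_nonempty.
  have [k' k'K k'k] := clique_other_vertex k.
  have /existsP[F /andP[fortF /eqP privF]] : [exists F, private_fort e S k F].
    by apply: (forall_inP ZIrS); exact: (subsetP KS).
  have inF y : y \in K -> y \in F -> y = k.
    by move=> yK yF; apply/set1P; rewrite -privF inE (subsetP KS).
  have kF : k \in F by have := set11 k; rewrite -privF inE => /andP[].
  have k'F : k' \notin F by apply: contra k'k => k'F; rewrite (inF k').
  have ek'k : e k' k by rewrite clique_adj k'k k'K.
  have [y /and3P[yF yk ek'y]] := fort_second_neighbour fortF k'F kF ek'k.
  by move: yk; rewrite (inF y) ?eqxx //; move: ek'y; rewrite clique_adj => /and3P[].
apply/forall_inP => x xS; apply/existsP.
have [xK|xK] := boolP (x \in K); last first.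
  exists [set x]; rewrite /private_fort fort_outside_clique //=.
  by apply/eqP/setIidPr; rewrite sub1set.
have kx : k != x by apply: contraNneq kS => ->.
exists [set x; k]; rewrite /private_fort fort_clique_pair // 1?eq_sym //=.
apply/eqP/setP => y; rewrite !inE; case: eqP => [->|_]; first by rewrite xS.
by case: eqP => [->|_]; rewrite ?(negbTE kS) ?andbF.
Qed.

Lemma maximal_ZIr_clique S : maxset (ZIr_set e) S -> exists2 k, k \in K & S = [set~ k].
Proof.
case/maxsetP; rewrite ZIr_set_clique => /subsetPn[k kK kS] maxS; exists k => //.
apply/setP => x; rewrite in_setC1; case: (eqVneq x k) => [->|xk]; first exact: negbTE.
have ZIr_xS : ZIr_set e (x |: S).
  by rewrite ZIr_set_clique; apply/subsetPn; exists k; rewrite // in_setU1 negb_or eq_sym xk.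
by rewrite -(maxS _ ZIr_xS (subsetUr _ _)) in_setU1 eqxx.
Qed.

Lemma maximal_ZIr_clique_card S : maxset (ZIr_set e) S -> #|S| = #|T| - 1.
Proof. by case/maximal_ZIr_clique=> k _ ->; exact: cards_setC1. Qed.

End CliquePlusIsolated.

Section GraphParameters.
Variables (T : finType) (e : rel T).
Hypotheses (esym : symmetric e) (eirr : irreflexive e) (hn : 2 <= #|T|).

Let T_gt0 : 0 < #|T| := ltnW hn.

Lemma Znum_clique_plus_isolated :
  Znum e = #|T| - 1 <-> exists K, clique_plus_isolated_on e K.
Proof.
have ZF_bounded B : zero_forcing e B -> #|B| <= #|T| by move=> _; exact: max_card.
rewrite /Znum; split=> [/eqP | [K cliqueK]].
  case/(bigminn_eqP _ (zero_forcing_setT e) ZF_bounded) => -[B ZFB cardB] minZ.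
  have [v Bv] := setC1_of_cards T_gt0 cardB; rewrite Bv in ZFB.
  apply: (clique_plus_isolated_of_zero_forcing_setC1 esym eirr ZFB) => w wv.
  by apply/negP => /minZ; rewrite cards_setC2 1?eq_sym //; lia.
apply/eqP/(bigminn_eqP _ (zero_forcing_setT e) ZF_bounded); split.
  have [k kK] := clique_nonempty cliqueK.
  exists [set~ k]; last exact: cards_setC1.
  exact: (zero_forcing_clique_setC1 cliqueK kK).
by move=> B; exact: (zero_forcing_clique_card cliqueK).
Qed.

Lemma Zbar_clique_plus_isolated :
  Zbar e = #|T| - 1 <-> exists K, clique_plus_isolated_on e K.
Proof.
have [B0 minB0] := exists_minimal_zero_forcing e.
rewrite /Zbar; split=> [/eqP | [K cliqueK]].
  case/(bigmaxn_eqP _ _ minB0) => -[B minB cardB] _.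
  have [v Bv] := setC1_of_cards T_gt0 cardB; rewrite Bv in minB.
  case/minsetP: minB => ZFv minv.
  apply: (clique_plus_isolated_of_zero_forcing_setC1 esym eirr ZFv) => w wv.
  apply/negP => ZFvw; have sub_vw : ~: [set v; w] \subset [set~ v].
    by rewrite setCS sub1set set21.
  by have /setP/(_ w) := minv _ ZFvw sub_vw; rewrite !inE eqxx orbT wv.
apply/eqP/(bigmaxn_eqP _ _ minB0); split.
  by exists B0; last exact: (minimal_zero_forcing_clique_card cliqueK).
by move=> B /(minimal_zero_forcing_clique_card cliqueK) ->.
Qed.

Lemma ZIR_clique_plus_isolated :
  ZIR e = #|T| - 1 <-> exists K, clique_plus_isolated_on e K.
Proof.
have [S0 maxS0] := exists_maximal_ZIr_set e.
rewrite /ZIR; split=> [/eqP | [K cliqueK]].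
  case/(bigmaxn_eqP _ _ maxS0) => -[S maxS cardS] _.
  have [v Sv] := setC1_of_cards T_gt0 cardS; rewrite Sv in maxS.
  exact: (clique_plus_isolated_of_maximal_ZIr_setC1 esym eirr maxS).
apply/eqP/(bigmaxn_eqP _ _ maxS0); split.
  by exists S0; last exact: (maximal_ZIr_clique_card cliqueK).
by move=> S /(maximal_ZIr_clique_card cliqueK) ->.
Qed.

Lemma zir_clique_plus_isolated :
  zir e = #|T| - 1 <-> exists K, clique_plus_isolated_on e K.
Proof.
have [S0 maxS0] := exists_maximal_ZIr_set e.
have ZIr_bounded S : maxset (ZIr_set e) S -> #|S| <= #|T| by move=> _; exact: max_card.
rewrite /zir; split=> [/eqP | [K cliqueK]].
  case/(bigminn_eqP _ maxS0 ZIr_bounded) => -[S maxS cardS] _.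
  have [v Sv] := setC1_of_cards T_gt0 cardS; rewrite Sv in maxS.
  exact: (clique_plus_isolated_of_maximal_ZIr_setC1 esym eirr maxS).
apply/eqP/(bigminn_eqP _ maxS0 ZIr_bounded); split.
  by exists S0; last exact: (maximal_ZIr_clique_card cliqueK).
by move=> S /(maximal_ZIr_clique_card cliqueK) ->.
Qed.

End GraphParameters.

Section Relabelling.
Variables (T : finType) (K : {set T}).

Let clique_first := enum K ++ enum (~: K).

Lemma mem_clique_first x : x \in clique_first.
Proof. by rewrite mem_cat !mem_enum inE orbN. Qed.

Lemma index_clique_first_lt x : index x clique_first < #|T|.
Proof. by rewrite -(cardsC K) !cardE -size_cat index_mem mem_clique_first. Qed.

Definition clique_first_rank x : 'I_#|T| := Ordinal (index_clique_first_lt x).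

Lemma clique_first_rank_inj : injective clique_first_rank.
Proof.
move=> x y /(congr1 val) /= eq_index.
exact: index_inj (mem_clique_first x) (mem_clique_first y) eq_index.
Qed.

Lemma clique_first_rank_lt x : (clique_first_rank x < #|K|) = (x \in K).
Proof.
rewrite /= index_cat mem_enum cardE; case: ifP => [xK|_]; first by rewrite index_mem mem_enum.
by rewrite ltnNge leq_addr.
Qed.

End Relabelling.

Lemma clique_plus_isolated_relabel (T : finType) (e : rel T) :
  (exists r, 2 <= #|T| - r /\ exists f : T -> 'I_#|T|, bijective f /\
     forall x y, e x y = clique_plus_isolated (#|T| - r) (f x) (f y)) <->
  exists K, clique_plus_isolated_on e K.
Proof.
split=> [[r [hr [f [[g fK gK] ef]]]] | [K [cardK adjK]]].
  exists [set x | f x < #|T| - r]; split; last first.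
    by move=> x y; rewrite ef /clique_plus_isolated !inE (inj_eq (can_inj fK)) andbA.
  have T_gt1 : 1 < #|T| by apply: leq_trans hr (leq_subr _ _).
  apply/card_gt1P; exists (g (Ordinal (ltnW T_gt1))), (g (Ordinal T_gt1)).
  by rewrite !inE !gK (inj_eq (can_inj gK)) /=; split=> //; apply: ltnW.
exists (#|T| - #|K|); rewrite subKn ?max_card //; split=> //.
exists (clique_first_rank K); split.
  by apply: inj_card_bij; [exact: clique_first_rank_inj | rewrite card_ord].
move=> x y; rewrite adjK /clique_plus_isolated !clique_first_rank_lt.
by rewrite (inj_eq (@clique_first_rank_inj _ K)) andbA.
Qed.

Theorem proposition5p2 (T : finType) (e : rel T)
  (esym : symmetric e) (eirr : irreflexive e) (hn : 2 <= #|T|) :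
  [<-> exists r : nat, (2 <= #|T| - r) /\
         exists f : T -> 'I_#|T|, bijective f /\
           (forall x y, e x y = clique_plus_isolated (#|T| - r) (f x) (f y));
       zir e = #|T| - 1;
       Znum e = #|T| - 1;
       Zbar e = #|T| - 1;
       ZIR e = #|T| - 1].
Proof.
have zirE := zir_clique_plus_isolated esym eirr hn.
have ZnumE := Znum_clique_plus_isolated esym eirr hn.
have ZbarE := Zbar_clique_plus_isolated esym eirr hn.
have ZIRE := ZIR_clique_plus_isolated esym eirr hn.
tfae=> [/clique_plus_isolated_relabel/zirE | /zirE/ZnumE | /ZnumE/ZbarE
       | /ZbarE/ZIRE | /ZIRE/clique_plus_isolated_relabel] //.
Qed.
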